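(* Let $\alpha\ge5$ and $g_\alpha(y)=\sum_{k,l\in\mathbb{Z}}\exp\!\big(-\tfrac{\pi\alpha}{y}(k^2+kl+(\tfrac14+y^2)l^2)\big)\cos\big(2\pi(ka_2(y)-la_1(y))\big)$ with $a_1(y)=\tfrac14+\tfrac1{16y^2}$, $a_2(y)=\tfrac12-\tfrac1{8y^2}$. Then $g_\alpha''(y)<0$ for all $y\in\big[\tfrac{\sqrt3}2,\tfrac{\sqrt3}2+\tfrac1{4\sqrt\alpha}\big]$. *)

From Stdlib Require Import Reals ZArith.
From Coquelicot Require Import Coquelicot.
Open Scope R_scope.

Definition sumZ (f : Z -> R) : R :=
  Series (fun n : nat => f (Z.of_nat n)) + Series (fun n : nat => f (- Z.of_nat (S n))%Z).

Definition a1 (y : R) : R := 1/4 + 1 / (16 * y ^ 2).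
Definition a2 (y : R) : R := 1/2 - 1 / (8 * y ^ 2).

Definition g_term (alpha y : R) (k l : Z) : R :=
  let kr := IZR k in let lr := IZR l in
  exp (- (PI * alpha / y) * (kr ^ 2 + kr * lr + (1/4 + y ^ 2) * lr ^ 2))
  * cos (2 * PI * (kr * a2 y - lr * a1 y)).

(* g_alpha(y) = sum over (k,l) in Z^2 (absolutely convergent for y > 0,
   so the iterated sum equals the double sum). *)
Definition g (alpha y : R) : R := sumZ (fun k => sumZ (fun l => g_term alpha y k l)).

From Stdlib Require Import Reals ZArith Lra Lia Psatz.
From Coquelicot Require Import Coquelicot.
Open Scope R_scope.

(* Every term of the theta series g_alpha, together with its first two y-derivatives, is bounded
   near y = sqrt 3 / 2 by 101 alpha^2 rho^(|k|+|l|) with rho = exp(-1/4), because its Gaussian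
   factor decays like exp(-pi alpha ((2k+l)^2 + l^2) / 4); hence g_alpha can be differentiated
   twice term by term. In g_alpha'' the terms (k, l) = (+-1, 0) are each at most
   -3 alpha^2 exp(-pi alpha / y), the terms (0, +-1), (1, -1), (-1, 1) are nonpositive and (0, 0)
   vanishes. Every other Gaussian factor is smaller than that of (+-1, 0) by a factor
   exp(-pi alpha) exp(-pi alpha ((2k+l)^2 + l^2) / 12), so these terms together contribute at most
   101 alpha^2 exp(-pi alpha / y) exp(-pi alpha) ((1 + rho) / (1 - rho))^2, which is negligible
   since exp(-pi alpha) <= exp(-15). The width of the interval only matters through y <= 0.98. *)

(** * Termwise differentiation of series *)

Lemma CVU_dom_series (D : R -> Prop) (f : nat -> R -> R) (M : nat -> R) :
  (forall n x, D x -> Rabs (f n x) <= M n) -> ex_series M ->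
  CVU_dom (fun n x => sum_n (fun k => f k x) n) D.
Proof.
  intros Hf HM. apply CVU_dom_cauchy. intros eps.
  destruct (Cauchy_ex_series M HM eps) as [N HN].
  exists N. intros n m x Dx Hn Hm.
  assert (tail : forall n m, (N <= n)%nat -> (n <= m)%nat ->
    Rabs (sum_n (fun k => f k x) m - sum_n (fun k => f k x) n) < eps).
  { clear n m Hn Hm. intros n m Hn Hnm.
    rewrite <- (@sum_n_m_sum_n R_AbelianGroup) by exact Hnm.
    eapply Rle_lt_trans; [apply (norm_sum_n_m (fun k => f k x))|].
    eapply Rle_lt_trans; [| apply (HN (S n) m); lia].
    eapply Rle_trans; [| apply Rle_abs].
    apply sum_n_m_le. intros k. now apply Hf. }
  destruct (le_lt_dec n m).
  - rewrite Rabs_minus_sym. apply tail; lia.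
  - apply tail; lia.
Qed.

Lemma continuous_sum_n (f : nat -> R -> R) (x : R) (n : nat) :
  (forall k, continuous (f k) x) -> continuous (fun y => sum_n (fun k => f k y) n) x.
Proof.
  intros Hf. induction n as [|n IH].
  - eapply continuous_ext; [| apply (Hf 0%nat)]. intros y. now rewrite sum_O.
  - apply (continuous_ext (fun y => sum_n (fun k => f k y) n + f (S n) y)).
    + intros y. now rewrite sum_Sn.
    + now apply (continuous_plus (fun y => sum_n (fun k => f k y) n) (f (S n))).
Qed.

Section UniformSeries.

Variable D : R -> Prop.
Hypothesis D_open : open D.

Lemma continuous_Series (f : nat -> R -> R) (M : nat -> R) :
  (forall n x, D x -> continuous (f n) x) ->
  (forall n x, D x -> Rabs (f n x) <= M n) -> ex_series M ->
  forall x, D x -> continuous (fun y => Series (fun n => f n y)) x.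
Proof.
  intros Hc Hf HM x Dx.
  apply continuity_pt_filterlim.
  apply (CVU_cont_open _ D D_open (CVU_dom_series D f M Hf HM)); [| exact Dx].
  intros n y Dy. apply continuity_pt_filterlim, continuous_sum_n. intros k. now apply Hc.
Qed.

Hypothesis D_connected : is_connected D.

Lemma is_derive_Series (f f' : nat -> R -> R) (M M' : nat -> R) :
  (forall n x, D x -> is_derive (f n) x (f' n x)) ->
  (forall n x, D x -> continuous (f' n) x) ->
  (forall n x, D x -> Rabs (f n x) <= M n) -> ex_series M ->
  (forall n x, D x -> Rabs (f' n x) <= M' n) -> ex_series M' ->
  forall x, D x -> is_derive (fun y => Series (fun n => f n y)) x (Series (fun n => f' n x)).
Proof.
  intros Hd Hc Hf HM Hf' HM' x Dx.
  set (S n y := sum_n (fun k => f k y) n).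
  assert (DS : forall n y, D y -> is_derive (S n) y (sum_n (fun k => f' k y) n)).
  { intros n y Dy. apply (is_derive_sum_n (fun k z => f k z)). intros k _. now apply Hd. }
  assert (DS_eq : forall n y, D y -> Derive (S n) y = sum_n (fun k => f' k y) n).
  { intros n y Dy. now apply is_derive_unique, DS. }
  assert (CVU' := CVU_dom_series D f' M' Hf' HM').
  assert (H : is_derive (fun y => real (Lim_seq (fun n => S n y))) x
                (real (Lim_seq (fun n => Derive (S n) x)))).
  { apply (CVU_Derive S D D_open D_connected (CVU_dom_series D f M Hf HM)); [| | | exact Dx].
    - intros n y Dy. eexists. now apply DS.
    - intros n y Dy. apply continuity_pt_filterlim.
      apply (continuous_ext_loc _ (fun z => sum_n (fun k => f' k z) n)).
      + apply (filter_imp D); [| now apply D_open]. intros z Dz. now rewrite DS_eq.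
      + apply continuous_sum_n. intros k. now apply Hc.
    - intros eps. destruct (CVU' eps) as [N HN]. exists N. intros n Hn y Dy.
      rewrite DS_eq, (Lim_seq_ext _ (fun n => sum_n (fun k => f' k y) n))
        by (auto; intros; now apply DS_eq).
      now apply HN. }
  rewrite (Lim_seq_ext _ (fun n => sum_n (fun k => f' k x) n)) in H by (intros; now apply DS_eq).
  exact H.
Qed.

End UniformSeries.

(** * Sums over Z *)

Definition ex_sumZ (f : Z -> R) : Prop :=
  ex_series (fun n => f (Z.of_nat n)) /\ ex_series (fun n => f (- Z.of_nat (S n))%Z).

Lemma sumZ_ext (f g : Z -> R) : (forall k, f k = g k) -> sumZ f = sumZ g.
Proof.
  intros Hfg. unfold sumZ.
  now rewrite (Series_ext _ (fun n => g (Z.of_nat n))),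
    (Series_ext (fun n => f _) (fun n => g (- Z.of_nat (S n))%Z)).
Qed.

Lemma ex_sumZ_ext (f g : Z -> R) : (forall k, f k = g k) -> ex_sumZ f -> ex_sumZ g.
Proof.
  intros Hfg [Hp Hn]. split.
  - now apply (ex_series_ext (fun n => f (Z.of_nat n))).
  - now apply (ex_series_ext (fun n => f (- Z.of_nat (S n))%Z)).
Qed.

Lemma ex_sumZ_le (f M : Z -> R) : (forall k, Rabs (f k) <= M k) -> ex_sumZ M -> ex_sumZ f.
Proof.
  intros Hf [Hp Hn]. split.
  - now apply (ex_series_le (fun n => f (Z.of_nat n)) (fun n => M (Z.of_nat n))).
  - now apply (ex_series_le (fun n => f (- Z.of_nat (S n))%Z) (fun n => M (- Z.of_nat (S n))%Z)).
Qed.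

Lemma ex_sumZ_plus (f g : Z -> R) : ex_sumZ f -> ex_sumZ g -> ex_sumZ (fun k => f k + g k).
Proof.
  intros [Hfp Hfn] [Hgp Hgn]. split.
  - now apply (ex_series_plus (fun n => f (Z.of_nat n)) (fun n => g (Z.of_nat n))).
  - now apply (ex_series_plus (fun n => f (- Z.of_nat (S n))%Z) (fun n => g (- Z.of_nat (S n))%Z)).
Qed.

Lemma ex_sumZ_scal_l (c : R) (f : Z -> R) : ex_sumZ f -> ex_sumZ (fun k => c * f k).
Proof.
  intros [Hp Hn]. split.
  - now apply (ex_series_scal_l c (fun n => f (Z.of_nat n))).
  - now apply (ex_series_scal_l c (fun n => f (- Z.of_nat (S n))%Z)).
Qed.

Lemma sumZ_plus (f g : Z -> R) :
  ex_sumZ f -> ex_sumZ g -> sumZ (fun k => f k + g k) = sumZ f + sumZ g.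
Proof.
  intros [Hfp Hfn] [Hgp Hgn]. unfold sumZ.
  rewrite (Series_plus (fun n => f (Z.of_nat n))) by assumption.
  rewrite (Series_plus (fun n => f (- Z.of_nat (S n))%Z)) by assumption.
  ring.
Qed.

Lemma sumZ_scal_l (c : R) (f : Z -> R) : sumZ (fun k => c * f k) = c * sumZ f.
Proof.
  unfold sumZ. rewrite (Series_scal_l c (fun n => f (Z.of_nat n))).
  rewrite (Series_scal_l c (fun n => f (- Z.of_nat (S n))%Z)). ring.
Qed.

Lemma Series_le_ex (a b : nat -> R) :
  (forall n, a n <= b n) -> ex_series a -> ex_series b -> Series a <= Series b.
Proof.
  intros Hab Ha Hb.
  assert (Hba : 0 <= Series (fun n => b n - a n)).
  { replace 0 with (Series (fun _ => 0)) at 1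
      by (rewrite (Series_ext _ (fun n => 0 * 0)), Series_scal_l by (intros; ring); ring).
    apply Series_le; [| now apply (ex_series_minus b a)].
    intros n. specialize (Hab n). lra. }
  rewrite Series_minus in Hba by assumption. lra.
Qed.

Lemma sumZ_le (f g : Z -> R) :
  (forall k, f k <= g k) -> ex_sumZ f -> ex_sumZ g -> sumZ f <= sumZ g.
Proof.
  intros Hfg [Hfp Hfn] [Hgp Hgn]. unfold sumZ.
  apply Rplus_le_compat; now apply Series_le_ex.
Qed.

Lemma Rabs_sumZ_le (f M : Z -> R) :
  (forall k, Rabs (f k) <= M k) -> ex_sumZ M -> Rabs (sumZ f) <= sumZ M.
Proof.
  intros Hf HM.
  assert (Hf' : ex_sumZ f) by now apply (ex_sumZ_le f M).
  assert (HM' : ex_sumZ (fun k => -1 * M k)) by now apply ex_sumZ_scal_l.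
  apply Rabs_le. split.
  - replace (- sumZ M) with (sumZ (fun k => -1 * M k)) by (rewrite sumZ_scal_l; ring).
    apply sumZ_le; try assumption.
    intros k. specialize (Hf k). apply Rabs_le_between in Hf. lra.
  - apply sumZ_le; try assumption.
    intros k. specialize (Hf k). apply Rabs_le_between in Hf. lra.
Qed.

Lemma ex_sumZ_lin (a b : R) (f h : Z -> R) :
  ex_sumZ f -> ex_sumZ h -> ex_sumZ (fun k => a * f k + b * h k).
Proof. intros Hf Hh. now apply ex_sumZ_plus; apply ex_sumZ_scal_l. Qed.

Lemma sumZ_lin (a b : R) (f h : Z -> R) :
  ex_sumZ f -> ex_sumZ h -> sumZ (fun k => a * f k + b * h k) = a * sumZ f + b * sumZ h.
Proof.
  intros Hf Hh. rewrite sumZ_plus by now apply ex_sumZ_scal_l.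
  now rewrite !sumZ_scal_l.
Qed.

Definition geomZ (r : R) (k : Z) : R := r ^ Z.abs_nat k.

Lemma geomZ_ge0 (r : R) (k : Z) : 0 <= r -> 0 <= geomZ r k.
Proof. intros Hr. now apply pow_le. Qed.

Lemma ex_sumZ_geomZ (r : R) : 0 <= r < 1 -> ex_sumZ (geomZ r).
Proof.
  intros Hr. unfold geomZ.
  assert (Hgeom : ex_series (fun n => r ^ n)) by (apply ex_series_geom; rewrite Rabs_pos_eq; lra).
  split.
  - apply (ex_series_ext (fun n => r ^ n)); [intros n; f_equal; lia | exact Hgeom].
  - apply (ex_series_ext (fun n => r * r ^ n)).
    + intros n. replace (Z.abs_nat _) with (S n) by lia. reflexivity.
    + now apply (ex_series_scal_l r (fun n => r ^ n)).
Qed.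

Lemma sumZ_geomZ (r : R) : 0 <= r < 1 -> sumZ (geomZ r) = (1 + r) / (1 - r).
Proof.
  intros Hr. unfold sumZ, geomZ.
  rewrite (Series_ext _ (fun n => r ^ n)) by (intros n; f_equal; lia).
  rewrite (Series_ext (fun n => r ^ Z.abs_nat _) (fun n => r * r ^ n))
    by (intros n; replace (Z.abs_nat _) with (S n) by lia; reflexivity).
  assert (Hgeom : is_series (pow r) (/ (1 - r)))
    by (apply is_series_geom; rewrite Rabs_pos_eq; lra).
  rewrite Series_scal_l, (is_series_unique (pow r) _ Hgeom).
  change (fun n => r ^ n) with (pow r). rewrite (is_series_unique (pow r) _ Hgeom).
  field. lra.
Qed.

Lemma Rabs_sumZ_geomZ_le (c r : R) (f : Z -> R) : 0 <= r < 1 ->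
  (forall k, Rabs (f k) <= c * geomZ r k) -> Rabs (sumZ f) <= c * ((1 + r) / (1 - r)).
Proof.
  intros Hr Hf. rewrite <- sumZ_geomZ, <- sumZ_scal_l by exact Hr.
  apply Rabs_sumZ_le; [exact Hf|]. now apply ex_sumZ_scal_l, ex_sumZ_geomZ.
Qed.

Definition diracZ (j k : Z) : R := if Z.eqb k j then 1 else 0.

Lemma Series_indicator (c : R) (m : nat) (a : nat -> R) :
  (forall n, a n = if Nat.eqb n m then c else 0) -> Series a = c.
Proof.
  revert a. induction m as [|m IH]; intros a Ha.
  - rewrite (Series_ext a (fun n => c * 0 ^ n)) by (intros [|n]; rewrite Ha; simpl; ring).
    rewrite Series_scal_l, (is_series_unique (pow 0) (/ (1 - 0))).
    + field.
    + apply is_series_geom. rewrite Rabs_R0. lra.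
  - rewrite Series_incr_1_aux by now rewrite Ha.
    apply IH. intros n. now rewrite Ha.
Qed.

Lemma sumZ_diracZ (j : Z) : sumZ (diracZ j) = 1.
Proof.
  unfold sumZ, diracZ. destruct (Z_le_gt_dec 0 j) as [Hj|Hj].
  - rewrite (Series_indicator 1 (Z.to_nat j)), (Series_indicator 0 0); [ring| |].
    + intros n. destruct (Z.eqb_spec (- Z.of_nat (S n)) j); [lia|]. now destruct (n =? 0)%nat.
    + intros n. destruct (Z.eqb_spec (Z.of_nat n) j), (Nat.eqb_spec n (Z.to_nat j));
        first [reflexivity | lia].
  - rewrite (Series_indicator 0 0), (Series_indicator 1 (Z.to_nat (- j - 1))); [ring| |].
    + intros n. destruct (Z.eqb_spec (- Z.of_nat (S n)) j), (Nat.eqb_spec n (Z.to_nat (- j - 1)));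
        first [reflexivity | lia].
    + intros n. destruct (Z.eqb_spec (Z.of_nat n) j); [lia|]. now destruct (n =? 0)%nat.
Qed.

Lemma ex_sumZ_diracZ (j : Z) : ex_sumZ (diracZ j).
Proof.
  apply (ex_sumZ_le _ (fun k => 2 ^ Z.abs_nat j * geomZ (1/2) k)).
  - intros k. unfold diracZ, geomZ. destruct (Z.eqb_spec k j) as [->|_].
    + rewrite Rabs_R1, <- Rpow_mult_distr. replace (2 * (1/2)) with 1 by field.
      rewrite pow1. lra.
    + rewrite Rabs_R0. apply Rmult_le_pos; apply pow_le; lra.
  - apply ex_sumZ_scal_l, ex_sumZ_geomZ. lra.
Qed.

Section TermwiseSumZ.

Variable D : R -> Prop.
Hypothesis D_open : open D.

Lemma continuous_sumZ (F : Z -> R -> R) (M : Z -> R) :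
  (forall k x, D x -> continuous (F k) x) ->
  (forall k x, D x -> Rabs (F k x) <= M k) -> ex_sumZ M ->
  forall x, D x -> continuous (fun y => sumZ (fun k => F k y)) x.
Proof.
  intros Hc HF [HMp HMn] x Dx. unfold sumZ.
  apply (continuous_plus (fun y => Series (fun n => F (Z.of_nat n) y))
                         (fun y => Series (fun n => F (- Z.of_nat (S n))%Z y))).
  - apply (continuous_Series D D_open (fun n => F (Z.of_nat n)) (fun n => M (Z.of_nat n))); auto.
  - apply (continuous_Series D D_open (fun n => F (- Z.of_nat (S n))%Z)
             (fun n => M (- Z.of_nat (S n))%Z)); auto.
Qed.

Hypothesis D_connected : is_connected D.

Lemma is_derive_sumZ (F F' : Z -> R -> R) (M M' : Z -> R) :
  (forall k x, D x -> is_derive (F k) x (F' k x)) ->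
  (forall k x, D x -> continuous (F' k) x) ->
  (forall k x, D x -> Rabs (F k x) <= M k) -> ex_sumZ M ->
  (forall k x, D x -> Rabs (F' k x) <= M' k) -> ex_sumZ M' ->
  forall x, D x -> is_derive (fun y => sumZ (fun k => F k y)) x (sumZ (fun k => F' k x)).
Proof.
  intros Hd Hc HF [HMp HMn] HF' [HMp' HMn'] x Dx. unfold sumZ.
  apply (is_derive_plus (fun y => Series (fun n => F (Z.of_nat n) y))
                        (fun y => Series (fun n => F (- Z.of_nat (S n))%Z y))).
  - apply (is_derive_Series D D_open D_connected
      (fun n => F (Z.of_nat n)) (fun n => F' (Z.of_nat n))
      (fun n => M (Z.of_nat n)) (fun n => M' (Z.of_nat n))); auto.
  - apply (is_derive_Series D D_open D_connected
      (fun n => F (- Z.of_nat (S n))%Z) (fun n => F' (- Z.of_nat (S n))%Z)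
      (fun n => M (- Z.of_nat (S n))%Z) (fun n => M' (- Z.of_nat (S n))%Z)); auto.
Qed.

Lemma is_derive_sumZ2 (F F' : Z -> Z -> R -> R) (C r : R) : 0 <= r < 1 ->
  (forall k l x, D x -> is_derive (F k l) x (F' k l x)) ->
  (forall k l x, D x -> continuous (F' k l) x) ->
  (forall k l x, D x -> Rabs (F k l x) <= C * geomZ r k * geomZ r l) ->
  (forall k l x, D x -> Rabs (F' k l x) <= C * geomZ r k * geomZ r l) ->
  forall x, D x ->
  is_derive (fun y => sumZ (fun k => sumZ (fun l => F k l y))) x
            (sumZ (fun k => sumZ (fun l => F' k l x))).
Proof.
  intros Hr Hd Hc HF HF'.
  set (G := (1 + r) / (1 - r)).
  assert (Hgeom : forall c, ex_sumZ (fun k => c * geomZ r k))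
    by (intros c; now apply ex_sumZ_scal_l, ex_sumZ_geomZ).
  assert (Hrow : forall (H : Z -> Z -> R -> R) k x,
            (forall l, Rabs (H k l x) <= C * geomZ r k * geomZ r l) ->
            Rabs (sumZ (fun l => H k l x)) <= (C * G) * geomZ r k).
  { intros H k x HH. replace (C * G * geomZ r k) with ((C * geomZ r k) * G) by ring.
    now apply Rabs_sumZ_geomZ_le. }
  apply (is_derive_sumZ _ _ (fun k => (C * G) * geomZ r k) (fun k => (C * G) * geomZ r k));
    try apply Hgeom.
  - intros k x Dx. apply (is_derive_sumZ (F k) (F' k)
      (fun l => (C * geomZ r k) * geomZ r l) (fun l => (C * geomZ r k) * geomZ r l));
      auto; apply Hgeom.
  - intros k x Dx. apply (continuous_sumZ (F' k) (fun l => (C * geomZ r k) * geomZ r l));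
      auto; apply Hgeom.
  - intros k x Dx. apply Hrow. auto.
  - intros k x Dx. apply Hrow. auto.
Qed.

End TermwiseSumZ.

(** * The terms of g and their first two derivatives *)

Lemma is_derive_exp_mul_trig (u v A B : R -> R) (x du dv dA dB : R) :
  is_derive u x du -> is_derive v x dv -> is_derive A x dA -> is_derive B x dB ->
  is_derive (fun y => exp (u y) * (A y * cos (v y) + B y * sin (v y))) x
    (exp (u x) * ((du * A x + dA + B x * dv) * cos (v x)
                  + (du * B x + dB - A x * dv) * sin (v x))).
Proof.
  intros Hu Hv HA HB.
  assert (Hexp := is_derive_comp exp u x _ _ (is_derive_exp (u x)) Hu).
  assert (Hcos := is_derive_comp cos v x _ _ (is_derive_cos (v x)) Hv).
  assert (Hsin := is_derive_comp sin v x _ _ (is_derive_sin (v x)) Hv).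
  assert (Hcomm : forall a b : R_AbsRing, mult a b = mult b a) by (intros; apply Rmult_comm).
  assert (H := is_derive_mult _ _ x _ _ Hexp
    (is_derive_plus _ _ x _ _ (is_derive_mult A _ x _ _ HA Hcos Hcomm)
                              (is_derive_mult B _ x _ _ HB Hsin Hcomm)) Hcomm).
  eapply is_derive_ext; [| eapply filterdiff_ext_lin; [exact H|]]; [reflexivity|].
  intros h. unfold plus, mult, scal; simpl; unfold mult; simpl. ring.
Qed.

(* [expo = - PI * al * q] with [q y = (K^2 + K L + (1/4 + y^2) L^2) / y]; [dq], [ddq] are the
   first two derivatives of [q] and [dphase], [ddphase] those of [phase]. *)
Definition expo (al y K L : R) : R :=
  - (PI * al / y) * (K ^ 2 + K * L + (1/4 + y ^ 2) * L ^ 2).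
Definition phase (y K L : R) : R := 2 * PI * (K * a2 y - L * a1 y).
Definition dq (y K L : R) : R := L ^ 2 - (2 * K + L) ^ 2 / (4 * y ^ 2).
Definition ddq (y K L : R) : R := (2 * K + L) ^ 2 / (2 * y ^ 3).
Definition dphase (y K L : R) : R := PI * (2 * K + L) / (4 * y ^ 3).
Definition ddphase (y K L : R) : R := - 3 * PI * (2 * K + L) / (4 * y ^ 4).

Definition term0 (al y K L : R) : R := exp (expo al y K L) * cos (phase y K L).
Definition term1 (al y K L : R) : R :=
  exp (expo al y K L)
  * (- (PI * al) * dq y K L * cos (phase y K L) - dphase y K L * sin (phase y K L)).
Definition term2 (al y K L : R) : R :=
  exp (expo al y K L)
  * ((PI ^ 2 * al ^ 2 * dq y K L ^ 2 - PI * al * ddq y K L - dphase y K L ^ 2) * cos (phase y K L)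
     + (2 * PI * al * dq y K L * dphase y K L - ddphase y K L) * sin (phase y K L)).

Ltac nonzero_product :=
  repeat split; repeat apply Rmult_integral_contrapositive_currified; (assumption || lra).

Section TermDerivatives.

Variables (al K L x : R).
Hypothesis x_neq0 : x <> 0.

Lemma is_derive_expo : is_derive (fun y => expo al y K L) x (- (PI * al) * dq x K L).
Proof. unfold expo, dq. auto_derive; [nonzero_product | field; exact x_neq0]. Qed.

Lemma is_derive_phase : is_derive (fun y => phase y K L) x (dphase x K L).
Proof. unfold phase, dphase, a1, a2. auto_derive; [nonzero_product | field; exact x_neq0]. Qed.

Lemma is_derive_dq : is_derive (fun y => dq y K L) x (ddq x K L).
Proof. unfold dq, ddq. auto_derive; [nonzero_product | field; exact x_neq0]. Qed.

Lemma is_derive_dphase : is_derive (fun y => dphase y K L) x (ddphase x K L).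
Proof. unfold dphase, ddphase. auto_derive; [nonzero_product | field; exact x_neq0]. Qed.

Lemma is_derive_term0 : is_derive (fun y => term0 al y K L) x (term1 al x K L).
Proof.
  assert (H := is_derive_exp_mul_trig _ _ (fun _ => 1) (fun _ => 0) x _ _ _ _
                 is_derive_expo is_derive_phase (is_derive_const 1 x) (is_derive_const 0 x)).
  eapply is_derive_ext; [| eapply filterdiff_ext_lin; [exact H|]].
  - intros t. unfold term0. simpl. ring.
  - intros h. unfold term1, scal, zero; simpl; unfold mult; simpl. ring.
Qed.

Lemma is_derive_term1 : is_derive (fun y => term1 al y K L) x (term2 al x K L).
Proof.
  assert (HA := is_derive_scal _ x (- (PI * al)) _ is_derive_dq).
  assert (HB := is_derive_opp _ x _ is_derive_dphase).
  assert (H := is_derive_exp_mul_trig _ _ _ _ x _ _ _ _ is_derive_expo is_derive_phase HA HB).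
  eapply is_derive_ext; [| eapply filterdiff_ext_lin; [exact H|]].
  - intros t. unfold term1, opp; simpl. ring.
  - intros h. unfold term2, scal, opp; simpl; unfold mult; simpl. ring.
Qed.

Lemma continuous_term1 : continuous (fun y => term1 al y K L) x.
Proof. apply (ex_derive_continuous (fun y => term1 al y K L)). eexists. exact is_derive_term1. Qed.

Lemma continuous_term2 : continuous (fun y => term2 al y K L) x.
Proof.
  apply (ex_derive_continuous (fun y => term2 al y K L)).
  unfold term2, expo, phase, dq, ddq, dphase, ddphase, a1, a2. auto_derive. nonzero_product.
Qed.
End TermDerivatives.

(** * Exponential decay of the terms *)

Lemma PI_3_4 : 3 <= PI <= 4.
Proof. split; [generalize PI2_3_2; lra | apply PI_4]. Qed.

Lemma Rabs_IZR_le_sqr (n : Z) : Rabs (IZR n) <= IZR n ^ 2.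
Proof.
  destruct (Z.eq_dec n 0) as [->|Hn].
  - simpl. rewrite Rabs_R0. lra.
  - assert (H1 : 1 <= Rabs (IZR n)) by (rewrite Rabs_Zabs; apply IZR_le; lia).
    rewrite <- pow2_abs. nra.
Qed.

Definition quad_size (K L : R) : R := (2 * K + L) ^ 2 + L ^ 2.

Lemma quad_size_IZR (k l : Z) : quad_size (IZR k) (IZR l) = IZR ((2 * k + l) * (2 * k + l) + l * l).
Proof. unfold quad_size. rewrite plus_IZR, !mult_IZR, plus_IZR, mult_IZR. ring. Qed.

Lemma quad_size_ge_abs (k l : Z) :
  Rabs (IZR k) + Rabs (IZR l) <= quad_size (IZR k) (IZR l).
Proof.
  rewrite !Rabs_Zabs, <- plus_IZR, quad_size_IZR. apply IZR_le.
  destruct (Z.eq_dec l 0) as [->|Hl]; [nia|].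
  destruct (Z.eq_dec (2 * k + l) 0) as [Hm|Hm]; nia.
Qed.

Lemma quad_size_le_sqr (k l : Z) :
  quad_size (IZR k) (IZR l) <= quad_size (IZR k) (IZR l) ^ 2.
Proof.
  rewrite quad_size_IZR. eapply Rle_trans; [apply Rle_abs | apply Rabs_IZR_le_sqr].
Qed.

Lemma inv_bounds (y a b : R) : 0 < a -> a <= y <= b -> / b <= / y <= / a.
Proof. intros Ha Hy. split; apply Rinv_le_contravar; lra. Qed.

Lemma coefficient_bounds (y K L : R) : 17/20 <= y <= 99/100 ->
  Rabs (2 * K + L) <= quad_size K L ->
  let s := quad_size K L in
  Rabs (dq y K L) <= s /\ 0 <= ddq y K L <= s /\
  Rabs (dphase y K L) <= 2 * s /\ Rabs (ddphase y K L) <= 6 * s.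
Proof.
  intros Hy Hm s. fold s in Hm.
  assert (HPI := PI_3_4).
  assert (Hz := inv_bounds y (17/20) (99/100) ltac:(lra) Hy).
  set (z := / y) in Hz. set (m := 2 * K + L) in *.
  assert (Hz2 : z ^ 2 <= 400 / 289) by nra.
  assert (Hz3 : z ^ 3 <= 163 / 100) by nra.
  assert (Hz4 : z ^ 4 <= 192 / 100) by nra.
  assert (Hm2 : 0 <= m ^ 2) by nra.
  assert (HL2 : 0 <= L ^ 2) by nra.
  assert (Es : s = m ^ 2 + L ^ 2) by reflexivity.
  assert (E1 : dq y K L = L ^ 2 - m ^ 2 / 4 * z ^ 2) by (unfold dq, z, m; field; lra).
  assert (E2 : ddq y K L = m ^ 2 / 2 * z ^ 3) by (unfold ddq, z, m; field; lra).
  assert (E3 : dphase y K L = (PI * z ^ 3 / 4) * m) by (unfold dphase, z, m; field; lra).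
  assert (E4 : ddphase y K L = - (3 * PI * z ^ 4 / 4) * m) by (unfold ddphase, z, m; field; lra).
  rewrite E1, E2, E3, E4, !Rabs_mult, Rabs_Ropp.
  rewrite (Rabs_pos_eq (PI * z ^ 3 / 4)), (Rabs_pos_eq (3 * PI * z ^ 4 / 4)) by nra.
  assert (Hm0 : 0 <= Rabs m) by apply Rabs_pos.
  assert (Hc3 : PI * z ^ 3 / 4 <= 2) by nra.
  assert (Hc4 : 3 * PI * z ^ 4 / 4 <= 6) by nra.
  repeat split; [apply Rabs_le; split | | | |]; nra.
Qed.

Lemma Rabs_mult_le (a b A B : R) : Rabs a <= A -> Rabs b <= B -> Rabs (a * b) <= A * B.
Proof. intros Ha Hb. rewrite Rabs_mult. apply Rmult_le_compat; auto; apply Rabs_pos. Qed.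

Lemma trig_combination_bound (p al s a b c d co si : R) :
  3 <= p <= 4 -> 5 <= al -> s <= s ^ 2 ->
  Rabs a <= s -> 0 <= b <= s -> Rabs c <= 2 * s -> Rabs d <= 6 * s ->
  Rabs co <= 1 -> Rabs si <= 1 ->
  Rabs (- (p * al) * a * co - c * si) <= 25 * al ^ 2 * s ^ 2 /\
  Rabs ((p ^ 2 * al ^ 2 * a ^ 2 - p * al * b - c ^ 2) * co + (2 * p * al * a * c - d) * si)
    <= 25 * al ^ 2 * s ^ 2.
Proof.
  intros Hp Hal Hss Ha Hb Hc Hd Hco Hsi.
  assert (Hs : 0 <= s) by (generalize (Rabs_pos a); lra).
  assert (Ha2 : a ^ 2 <= s ^ 2)
    by (rewrite <- pow2_abs; apply pow_incr; split; [apply Rabs_pos | exact Ha]).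
  assert (Hc2 : c ^ 2 <= 4 * s ^ 2).
  { rewrite <- pow2_abs. replace (4 * s ^ 2) with ((2 * s) ^ 2) by ring.
    apply pow_incr. split; [apply Rabs_pos | exact Hc]. }
  assert (Hpal : Rabs (p * al) <= 4 * al) by (rewrite Rabs_pos_eq; nra).
  assert (HA : Rabs (p ^ 2 * al ^ 2 * a ^ 2 - p * al * b - c ^ 2)
               <= 16 * al ^ 2 * s ^ 2 + 4 * al * s + 4 * s ^ 2).
  { assert (0 <= p ^ 2 * al ^ 2 * a ^ 2 <= 16 * al ^ 2 * s ^ 2).
    { split; [apply Rmult_le_pos; [nra | apply pow2_ge_0]|].
      assert (p ^ 2 <= 16) by nra.
      apply Rmult_le_compat; [nra | apply pow2_ge_0 | | exact Ha2].
      apply Rmult_le_compat_r; [apply pow2_ge_0 | lra]. }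
    assert (0 <= p * al * b <= 4 * al * s)
      by (split; [apply Rmult_le_pos | apply Rmult_le_compat]; nra).
    assert (0 <= c ^ 2) by apply pow2_ge_0.
    apply Rabs_le. split; nra. }
  assert (HB : Rabs (2 * p * al * a * c - d) <= 16 * al * s ^ 2 + 6 * s).
  { unfold Rminus. eapply Rle_trans; [apply Rabs_triang|]. rewrite Rabs_Ropp.
    replace (2 * p * al * a * c) with (2 * (p * al) * a * c) by ring.
    assert (Rabs (2 * (p * al) * a * c) <= 2 * (4 * al) * s * (2 * s)).
    { apply Rabs_mult_le; [apply Rabs_mult_le; [apply Rabs_mult_le|]|]; try assumption.
      rewrite Rabs_pos_eq; lra. }
    nra. }
  split.
  - unfold Rminus. eapply Rle_trans; [apply Rabs_triang|]. rewrite Rabs_Ropp.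
    assert (Rabs (- (p * al) * a * co) <= 4 * al * s * 1).
    { apply Rabs_mult_le; [apply Rabs_mult_le|]; try assumption. now rewrite Rabs_Ropp. }
    assert (Rabs (c * si) <= 2 * s * 1) by (apply Rabs_mult_le; auto).
    nra.
  - eapply Rle_trans; [apply Rabs_triang|].
    assert (H1 := Rabs_mult_le _ _ _ _ HA Hco).
    assert (H2 := Rabs_mult_le _ _ _ _ HB Hsi).
    nra.
Qed.

Lemma term_bounds_exp (al y : R) (k l : Z) : 5 <= al -> 17/20 <= y <= 99/100 ->
  let K := IZR k in let L := IZR l in
  let bound := exp (expo al y K L) * (1 + 25 * al ^ 2 * quad_size K L ^ 2) in
  Rabs (term0 al y K L) <= bound /\ Rabs (term1 al y K L) <= bound /\
  Rabs (term2 al y K L) <= bound.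
Proof.
  intros Hal Hy K L bound.
  assert (Hm : Rabs (2 * K + L) <= quad_size K L).
  { unfold quad_size. replace (2 * K + L) with (IZR (2 * k + l))
      by (unfold K, L; now rewrite plus_IZR, mult_IZR).
    generalize (Rabs_IZR_le_sqr (2 * k + l)) (pow2_ge_0 L). lra. }
  destruct (coefficient_bounds y K L Hy Hm) as (Hdq & Hddq & Hdph & Hddph).
  assert (Hco : Rabs (cos (phase y K L)) <= 1) by (apply Rabs_le, COS_bound).
  assert (Hsi : Rabs (sin (phase y K L)) <= 1) by (apply Rabs_le, SIN_bound).
  assert (Hss := quad_size_le_sqr k l). fold K L in Hss.
  destruct (trig_combination_bound PI al _ _ _ _ _ _ _ PI_3_4 Hal Hss
              Hdq Hddq Hdph Hddph Hco Hsi) as [H1 H2].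
  assert (Hexp : 0 < exp (expo al y K L)) by apply exp_pos.
  assert (0 <= 25 * al ^ 2 * quad_size K L ^ 2)
    by (generalize (pow2_ge_0 al) (pow2_ge_0 (quad_size K L)); nra).
  unfold bound, term0, term1, term2. rewrite !Rabs_mult, !(Rabs_pos_eq (exp _)) by lra.
  repeat split; apply Rmult_le_compat_l; lra.
Qed.

Lemma exp_le_exp (x y : R) : x <= y -> exp x <= exp y.
Proof. intros [Hxy | ->]; [left; now apply exp_increasing | lra]. Qed.

Lemma exp_m15_le : exp (- 15) <= / 32768.
Proof.
  assert (He : 2 <= exp 1) by (generalize (exp_ineq1_le 1); lra).
  assert (Hpow : forall n, exp (INR n) = exp 1 ^ n).
  { induction n as [|n IH]; [apply exp_0 | rewrite S_INR, exp_plus, IH; simpl; ring]. }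
  assert (H15 : 2 ^ 15 <= exp 15).
  { replace 15 with (INR 15) by (simpl; ring). rewrite Hpow. apply pow_incr. lra. }
  replace (exp (- 15)) with (/ exp 15) by (rewrite <- exp_Ropp; f_equal; ring).
  apply Rinv_le_contravar; simpl in H15; lra.
Qed.

Definition rho : R := exp (- 1 / 4).

Lemma rho_bounds : 0 <= rho <= 4/5.
Proof.
  unfold rho. split; [left; apply exp_pos|].
  assert (H := exp_ineq1_le (1/4)).
  assert (E : exp (-1/4) * exp (1/4) = 1)
    by (rewrite <- exp_plus; replace (-1/4 + 1/4) with 0 by field; apply exp_0).
  assert (0 < exp (-1/4)) by apply exp_pos. nra.
Qed.

Lemma rho_lt_1 : 0 <= rho < 1.
Proof. generalize rho_bounds. lra. Qed.

Definition rho_sum : R := (1 + rho) / (1 - rho).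

Lemma rho_sum_bounds : 0 <= rho_sum <= 9.
Proof.
  assert (H := rho_bounds). unfold rho_sum. split.
  - apply Rmult_le_pos; [lra | left; apply Rinv_0_lt_compat; lra].
  - apply (Rmult_le_reg_r (1 - rho)); [lra|].
    unfold Rdiv. rewrite Rmult_assoc, Rinv_l by lra. lra.
Qed.

Lemma sqr_le_4exp (x : R) : 0 <= x -> x ^ 2 <= 4 * exp x.
Proof.
  intros Hx. replace x with (x/2 + x/2) at 2 by field. rewrite exp_plus.
  assert (H := exp_ineq1_le (x/2)). nra.
Qed.

Lemma exp_abs_sum_geomZ (k l : Z) :
  exp (- (Rabs (IZR k) + Rabs (IZR l)) / 4) = geomZ rho k * geomZ rho l.
Proof.
  assert (Hpow : forall n, exp (- INR n / 4) = rho ^ n).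
  { induction n as [|n IH].
    - simpl. replace (- 0 / 4) with 0 by field. apply exp_0.
    - rewrite S_INR. simpl. rewrite <- IH. unfold rho. rewrite <- exp_plus. f_equal. field. }
  unfold geomZ. rewrite <- !Hpow, <- exp_plus, !Rabs_Zabs, !INR_IZR_INZ, !Nat2Z.inj_abs_nat.
  f_equal. field.
Qed.

Lemma exp_decay_bound (al a w s : R) (k l : Z) : 5 <= al ->
  Rabs (IZR k) + Rabs (IZR l) <= s -> a <= w - PI * al * s / 12 ->
  exp a * (1 + 25 * al ^ 2 * s ^ 2) <= exp w * (101 * al ^ 2) * (geomZ rho k * geomZ rho l).
Proof.
  intros Hal Hs Ha.
  assert (Hs0 : 0 <= s) by (generalize (Rabs_pos (IZR k)) (Rabs_pos (IZR l)); lra).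
  assert (HPI := PI_3_4).
  assert (Hrate : 15 * s <= PI * al * s) by (apply Rmult_le_compat_r; nra).
  assert (Hexp_a : exp a <= exp w * exp (- 5 * s / 4)).
  { rewrite <- exp_plus. apply exp_le_exp. lra. }
  assert (Hsq : exp (- 5 * s / 4) * s ^ 2 <= 4 * exp (- s / 4)).
  { replace (exp (- s / 4)) with (exp s * exp (- 5 * s / 4))
      by (rewrite <- exp_plus; f_equal; field).
    generalize (sqr_le_4exp s Hs0) (exp_pos (- 5 * s / 4)). nra. }
  assert (Hmono : exp (- 5 * s / 4) <= exp (- s / 4)) by (apply exp_le_exp; lra).
  assert (Hgeom : exp (- s / 4) <= geomZ rho k * geomZ rho l)
    by (rewrite <- exp_abs_sum_geomZ; apply exp_le_exp; lra).
  assert (Hbody : exp (- 5 * s / 4) * (1 + 25 * al ^ 2 * s ^ 2) <= 101 * al ^ 2 * exp (- s / 4)).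
  { assert (1 <= al ^ 2) by nra. generalize (exp_pos (- s / 4)). nra. }
  assert (HX : 0 <= 1 + 25 * al ^ 2 * s ^ 2) by (generalize (pow2_ge_0 al) (pow2_ge_0 s); nra).
  apply Rle_trans with (exp w * (exp (- 5 * s / 4) * (1 + 25 * al ^ 2 * s ^ 2))).
  { rewrite <- Rmult_assoc. now apply Rmult_le_compat_r. }
  rewrite (Rmult_assoc (exp w)). apply Rmult_le_compat_l; [generalize (exp_pos w); lra|].
  generalize (pow2_ge_0 al). nra.
Qed.

Lemma expo_eq (al y K L : R) : y <> 0 ->
  expo al y K L = - PI * al * ((2 * K + L) ^ 2 / 4 * / y + y * L ^ 2).
Proof. intros Hy. unfold expo. field. exact Hy. Qed.

Lemma expo_le_quad_size (al y K L : R) : 0 <= al -> 1/4 <= y <= 1 ->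
  expo al y K L <= - PI * al * quad_size K L / 4.
Proof.
  intros Hal Hy. rewrite expo_eq by lra. unfold quad_size.
  assert (HPI := PI_3_4).
  assert (Hz : 1 <= / y) by (rewrite <- Rinv_1; apply Rinv_le_contravar; lra).
  assert (Hm := pow2_ge_0 (2 * K + L)). assert (HL := pow2_ge_0 L).
  assert (((2 * K + L) ^ 2 + L ^ 2) / 4 <= (2 * K + L) ^ 2 / 4 * / y + y * L ^ 2) by nra.
  assert (0 <= PI * al) by nra.
  assert (PI * al * (((2 * K + L) ^ 2 + L ^ 2) / 4)
          <= PI * al * ((2 * K + L) ^ 2 / 4 * / y + y * L ^ 2)) by (apply Rmult_le_compat_l; lra).
  lra.
Qed.

Definition window (y : R) : Prop := 17/20 < y < 99/100.

Lemma window_open : open window.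
Proof. apply open_and; [apply open_gt | apply open_lt]. Qed.

Lemma window_connected : is_connected window.
Proof. intros a b x Ha Hb Hx. unfold window in *. lra. Qed.

Lemma term_bounds (al y : R) (k l : Z) : 5 <= al -> window y ->
  let K := IZR k in let L := IZR l in
  let bound := 101 * al ^ 2 * geomZ rho k * geomZ rho l in
  Rabs (term0 al y K L) <= bound /\ Rabs (term1 al y K L) <= bound /\
  Rabs (term2 al y K L) <= bound.
Proof.
  intros Hal Hy K L bound. unfold window in Hy.
  assert (HPI := PI_3_4).
  assert (Hs := quad_size_ge_abs k l). fold K L in Hs.
  assert (Hexpo := expo_le_quad_size al y K L ltac:(lra) ltac:(lra)).
  assert (Hdecay := exp_decay_bound al (expo al y K L) 0 _ k l Hal Hs).
  rewrite exp_0, Rmult_1_l, <- Rmult_assoc in Hdecay.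
  assert (Hs0 : 0 <= quad_size K L) by (generalize (Rabs_pos K) (Rabs_pos L); lra).
  destruct (term_bounds_exp al y k l Hal ltac:(lra)) as (H0 & H1 & H2). fold K L in H0, H1, H2.
  assert (Hle : exp (expo al y K L) * (1 + 25 * al ^ 2 * quad_size K L ^ 2) <= bound).
  { apply Hdecay.
    assert (0 <= PI * al * quad_size K L) by (apply Rmult_le_pos; nra). lra. }
  repeat split; lra.
Qed.

(** * Differentiating g twice *)

(* [g al] is convertible to the double sum of [term0]. *)
Lemma is_derive_g (al x : R) : 5 <= al -> window x ->
  is_derive (g al) x (sumZ (fun k => sumZ (fun l => term1 al x (IZR k) (IZR l)))).
Proof.
  intros Hal.
  apply (is_derive_sumZ2 window window_open window_connected
           (fun k l y => term0 al y (IZR k) (IZR l)) (fun k l y => term1 al y (IZR k) (IZR l))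
           (101 * al ^ 2) rho rho_lt_1); intros k l y Hy.
  - apply is_derive_term0. unfold window in Hy. lra.
  - apply continuous_term1. unfold window in Hy. lra.
  - apply (term_bounds al y k l Hal Hy).
  - apply (term_bounds al y k l Hal Hy).
Qed.

Lemma is_derive_dg (al x : R) : 5 <= al -> window x ->
  is_derive (fun y => sumZ (fun k => sumZ (fun l => term1 al y (IZR k) (IZR l)))) x
            (sumZ (fun k => sumZ (fun l => term2 al x (IZR k) (IZR l)))).
Proof.
  intros Hal.
  apply (is_derive_sumZ2 window window_open window_connected
           (fun k l y => term1 al y (IZR k) (IZR l)) (fun k l y => term2 al y (IZR k) (IZR l))
           (101 * al ^ 2) rho rho_lt_1); intros k l y Hy.
  - apply is_derive_term1. unfold window in Hy. lra.
  - apply continuous_term2. unfold window in Hy. lra.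
  - apply (term_bounds al y k l Hal Hy).
  - apply (term_bounds al y k l Hal Hy).
Qed.

Lemma Derive2_g (al y : R) : 5 <= al -> window y ->
  Derive_n (g al) 2 y = sumZ (fun k => sumZ (fun l => term2 al y (IZR k) (IZR l))).
Proof.
  intros Hal Hy. simpl.
  rewrite (Derive_ext_loc _ (fun t => sumZ (fun k => sumZ (fun l => term1 al t (IZR k) (IZR l))))).
  - now apply is_derive_unique, is_derive_dg.
  - apply (filter_imp window); [| now apply window_open].
    intros t Ht. now apply is_derive_unique, is_derive_g.
Qed.

Lemma ex_sumZ_term2 (al y : R) : 5 <= al -> window y ->
  (forall k, ex_sumZ (fun l => term2 al y (IZR k) (IZR l)))
  /\ ex_sumZ (fun k => sumZ (fun l => term2 al y (IZR k) (IZR l))).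
Proof.
  intros Hal Hy.
  assert (Hgeom := ex_sumZ_geomZ rho rho_lt_1).
  split.
  - intros k. apply (ex_sumZ_le _ (fun l => (101 * al ^ 2 * geomZ rho k) * geomZ rho l)).
    + intros l. apply (term_bounds al y k l Hal Hy).
    + now apply ex_sumZ_scal_l.
  - apply (ex_sumZ_le _ (fun k => (101 * al ^ 2 * rho_sum) * geomZ rho k));
      [| now apply ex_sumZ_scal_l].
    intros k. replace (101 * al ^ 2 * rho_sum * geomZ rho k)
      with ((101 * al ^ 2 * geomZ rho k) * rho_sum) by ring.
    apply Rabs_sumZ_geomZ_le; [exact rho_lt_1|]. intros l. apply (term_bounds al y k l Hal Hy).
Qed.

(** * Sign of the second derivative *)

Lemma sqrt3_bounds : 1732/1000 <= sqrt 3 <= 17321/10000.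
Proof. generalize (sqrt_sqrt 3 ltac:(lra)) (sqrt_pos 3). split; nra. Qed.

Lemma inv_bounds_near_sqrt3 (y : R) : sqrt 3 / 2 <= y <= 98/100 ->
  0 < y /\ 102/100 <= / y <= 1155/1000 /\ (/ y) ^ 2 <= 4/3.
Proof.
  intros Hy. assert (S3 := sqrt3_bounds).
  assert (Hs : sqrt 3 * sqrt 3 = 3) by (apply sqrt_sqrt; lra).
  assert (Hinv := inv_bounds y (866/1000) (98/100) ltac:(lra) ltac:(lra)).
  split; [lra | split; [split; lra |]].
  rewrite pow_inv. replace (4/3) with (/ (3/4)) by field.
  apply Rinv_le_contravar; nra.
Qed.

Lemma term2_opp (al y K L : R) : term2 al y (- K) (- L) = term2 al y K L.
Proof.
  unfold term2.
  replace (phase y (- K) (- L)) with (- phase y K L) by (unfold phase; ring).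
  replace (expo al y (- K) (- L)) with (expo al y K L) by (unfold expo; ring).
  replace (dq y (- K) (- L)) with (dq y K L) by (unfold dq, Rdiv; ring).
  replace (ddq y (- K) (- L)) with (ddq y K L) by (unfold ddq, Rdiv; ring).
  replace (dphase y (- K) (- L)) with (- dphase y K L) by (unfold dphase, Rdiv; ring).
  replace (ddphase y (- K) (- L)) with (- ddphase y K L) by (unfold ddphase, Rdiv; ring).
  rewrite cos_neg, sin_neg. ring.
Qed.

Lemma term2_origin (al y : R) : term2 al y 0 0 = 0.
Proof. unfold term2, dq, ddq, dphase, ddphase, Rdiv. ring. Qed.

(* (1, -1) and (0, 1) have the same quadratic form and phases differing by [2 PI]. *)
Lemma term2_1_m1 (al y : R) : y <> 0 -> term2 al y 1 (-1) = term2 al y 0 1.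
Proof.
  intros Hy. unfold term2.
  replace (phase y 1 (-1)) with (phase y 0 1 + 2 * PI) by (unfold phase, a1, a2; field; exact Hy).
  replace (expo al y 1 (-1)) with (expo al y 0 1) by (unfold expo; field; exact Hy).
  replace (dq y 1 (-1)) with (dq y 0 1) by (unfold dq; field; exact Hy).
  replace (ddq y 1 (-1)) with (ddq y 0 1) by (unfold ddq; field; exact Hy).
  replace (dphase y 1 (-1)) with (dphase y 0 1) by (unfold dphase; field; exact Hy).
  replace (ddphase y 1 (-1)) with (ddphase y 0 1) by (unfold ddphase; field; exact Hy).
  rewrite cos_plus, sin_plus, cos_2PI, sin_2PI. ring.
Qed.

Lemma term2_1_0 (al y : R) : 5 <= al -> sqrt 3 / 2 <= y <= 98/100 ->
  term2 al y 1 0 <= - 3 * al ^ 2 * exp (- PI * al / y).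
Proof.
  intros Hal Hy. destruct (inv_bounds_near_sqrt3 y Hy) as (Hy0 & Hz & Hz2).
  assert (HPI := PI_3_4).
  set (z := / y) in *.
  unfold term2.
  replace (expo al y 1 0) with (- PI * al / y) by (unfold expo; field; lra).
  replace (dq y 1 0) with (- z ^ 2) by (unfold dq, z; field; lra).
  replace (ddq y 1 0) with (2 * z ^ 3) by (unfold ddq, z; field; lra).
  replace (dphase y 1 0) with (PI * z ^ 3 / 2) by (unfold dphase, z; field; lra).
  replace (ddphase y 1 0) with (- 3 * PI * z ^ 4 / 2) by (unfold ddphase, z; field; lra).
  replace (phase y 1 0) with (PI - PI * z ^ 2 / 4) by (unfold phase, a1, a2, z; field; lra).
  rewrite Rtrigo_facts.cos_pi_minus, sin_PI_x.
  set (x := PI * z ^ 2 / 4).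
  assert (Hx : 0 < x <= PI / 3) by (unfold x; split; nra).
  assert (Hcos : 1/2 <= cos x).
  { rewrite <- cos_PI3. destruct (Req_dec x (PI/3)) as [->|Hne]; [lra|].
    left. apply cos_decreasing_1; lra. }
  assert (Hsin : 0 <= sin x) by (apply sin_ge_0; lra).
  assert (HE := exp_pos (- PI * al / y)).
  assert (Hz2' : 10404/10000 <= z ^ 2) by nra.
  assert (Hz4 : 1082/1000 <= z ^ 4) by (replace (z ^ 4) with (z ^ 2 * z ^ 2) by ring; nra).
  assert (Hz3 : z ^ 3 <= 1541/1000) by (replace (z ^ 3) with (z ^ 2 * z) by ring; nra).
  assert (Hz6 : z ^ 6 <= 2374/1000).
  { replace (z ^ 6) with (z ^ 2 * z ^ 2 * z ^ 2) by ring.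
    assert (z ^ 2 * z ^ 2 <= 16/9) by nra. nra. }
  assert (HPa : 15 <= PI * al) by nra.
  set (A := PI ^ 2 * al ^ 2 * (- z ^ 2) ^ 2 - PI * al * (2 * z ^ 3) - (PI * z ^ 3 / 2) ^ 2).
  assert (HA : 6 * al ^ 2 <= A).
  { unfold A.
    assert (9 * (1082/1000) <= PI ^ 2 * z ^ 4) by nra.
    assert (PI * al * (2 * z ^ 3) <= 2 * 4 * (1541/1000) * al) by nra.
    assert ((PI * z ^ 3 / 2) ^ 2 <= 16 * (2374/1000) / 4) by nra.
    replace (PI ^ 2 * al ^ 2 * (- z ^ 2) ^ 2) with ((PI ^ 2 * z ^ 4) * al ^ 2) by ring.
    assert (9 * (1082/1000) * al ^ 2 <= (PI ^ 2 * z ^ 4) * al ^ 2)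
      by (apply Rmult_le_compat_r; [apply pow2_ge_0 | lra]).
    nra. }
  set (B := 2 * PI * al * - z ^ 2 * (PI * z ^ 3 / 2) - - 3 * PI * z ^ 4 / 2).
  assert (HB : B <= 0).
  { replace B with ((PI * z ^ 4) * (3/2 - PI * al * z)) by (unfold B; field).
    assert (0 <= PI * z ^ 4) by nra. assert (15 <= PI * al * z) by nra. nra. }
  assert (A * - cos x + B * sin x <= - 3 * al ^ 2) by nra.
  nra.
Qed.

Lemma term2_0_1 (al y : R) : 5 <= al -> sqrt 3 / 2 <= y <= 98/100 -> term2 al y 0 1 <= 0.
Proof.
  intros Hal Hy. destruct (inv_bounds_near_sqrt3 y Hy) as (Hy0 & Hz & Hz2).
  assert (HPI := PI_3_4).
  set (z := / y) in *.
  set (x := PI * z ^ 2 / 8).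
  unfold term2.
  replace (dq y 0 1) with (1 - z ^ 2 / 4) by (unfold dq, z; field; lra).
  replace (ddq y 0 1) with (z ^ 3 / 2) by (unfold ddq, z; field; lra).
  replace (dphase y 0 1) with (PI * z ^ 3 / 4) by (unfold dphase, z; field; lra).
  replace (ddphase y 0 1) with (- (3 * PI * z ^ 4 / 4)) by (unfold ddphase, z; field; lra).
  replace (phase y 0 1) with (- (PI / 2 + x)) by (unfold phase, a1, a2, x, z; field; lra).
  rewrite cos_neg, sin_neg, cos_plus, sin_plus, cos_PI2, sin_PI2.
  assert (Hx : 0 < x <= PI / 6) by (unfold x; split; nra).
  assert (Hsin : 0 <= sin x) by (apply sin_ge_0; lra).
  assert (Hcos : 0 <= cos x) by (apply cos_ge_0; lra).
  assert (HE := exp_pos (expo al y 0 1)).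
  assert (Hz3 : 0 <= z ^ 3 <= 1541/1000) by (replace (z ^ 3) with (z ^ 2 * z) by ring; split; nra).
  assert (Hz4 : 0 <= z ^ 4) by (replace (z ^ 4) with (z ^ 2 * z ^ 2) by ring; nra).
  assert (HPa : 15 <= PI * al) by nra.
  set (A := PI ^ 2 * al ^ 2 * (1 - z ^ 2 / 4) ^ 2 - PI * al * (z ^ 3 / 2) - (PI * z ^ 3 / 4) ^ 2).
  assert (HA : 0 <= A).
  { unfold A.
    assert ((4/9) * (PI * al) ^ 2 <= PI ^ 2 * al ^ 2 * (1 - z ^ 2 / 4) ^ 2).
    { replace (PI ^ 2 * al ^ 2 * (1 - z ^ 2 / 4) ^ 2) with ((PI * al) ^ 2 * (1 - z ^ 2 / 4) ^ 2)
        by ring.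
      assert (4/9 <= (1 - z ^ 2 / 4) ^ 2) by nra.
      generalize (pow2_ge_0 (PI * al)). nra. }
    assert (15 * (PI * al) <= (PI * al) ^ 2) by nra.
    assert (PI * al * (z ^ 3 / 2) <= PI * al * (1541/2000)) by (apply Rmult_le_compat_l; lra).
    assert ((PI * z ^ 3 / 4) ^ 2 <= (1541/1000) ^ 2) by (apply pow_incr; split; nra).
    lra. }
  set (B := 2 * PI * al * (1 - z ^ 2 / 4) * (PI * z ^ 3 / 4) - - (3 * PI * z ^ 4 / 4)).
  assert (HB : 0 <= B).
  { unfold B. assert (0 <= PI * al * (1 - z ^ 2 / 4)) by nra.
    assert (0 <= PI * z ^ 3) by nra. assert (0 <= PI * z ^ 4) by nra. nra. }
  assert (A * (0 * cos x - 1 * sin x) + B * - (1 * cos x + 0 * sin x) <= 0) by nra.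
  apply Rle_trans with (exp (expo al y 0 1) * 0);
    [apply Rmult_le_compat_l | rewrite Rmult_0_r]; lra.
Qed.

Definition tail_index (k l : Z) : Prop :=
  (4 <= l * l \/ (l * l = 1 /\ 9 <= (2 * k + l) * (2 * k + l))
   \/ (l = 0 /\ 16 <= (2 * k + l) * (2 * k + l)))%Z.

Lemma index_cases (k l : Z) :
  (k = 0 /\ l = 0)%Z \/ (l = 0 /\ (k = 1 \/ k = -1))%Z \/
  ((k = 0 /\ l = 1) \/ (k = 1 /\ l = -1) \/ (k = 0 /\ l = -1) \/ (k = -1 /\ l = 1))%Z \/
  tail_index k l.
Proof.
  unfold tail_index.
  destruct (Z_le_gt_dec 2 (Z.abs l)); [right; right; right; left; nia|].
  assert (Hl : (l = 0 \/ l = 1 \/ l = -1)%Z) by lia.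
  destruct (Z_le_gt_dec 2 (Z.abs k)); [destruct Hl as [-> | [-> | ->]]; nia|].
  assert (Hk : (k = 0 \/ k = 1 \/ k = -1)%Z) by lia.
  destruct Hl as [-> | [-> | ->]], Hk as [-> | [-> | ->]]; lia.
Qed.

Lemma expo_tail (al y : R) (k l : Z) : 0 <= al -> sqrt 3 / 2 <= y <= 98/100 -> tail_index k l ->
  expo al y (IZR k) (IZR l)
  <= - PI * al / y - PI * al - PI * al * quad_size (IZR k) (IZR l) / 12.
Proof.
  intros Hal Hy Htail. destruct (inv_bounds_near_sqrt3 y Hy) as (Hy0 & Hz & _).
  assert (S3 := sqrt3_bounds).
  rewrite expo_eq by lra. unfold quad_size.
  replace (2 * IZR k + IZR l) with (IZR (2 * k + l)) by (now rewrite plus_IZR, mult_IZR).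
  assert (Hsq : forall a : Z, IZR a ^ 2 = IZR (a * a)) by (intros; rewrite mult_IZR; ring).
  rewrite !Hsq.
  set (M := IZR ((2 * k + l) * (2 * k + l))). set (L2 := IZR (l * l)).
  assert (Hkey : / y + 1 + (M + L2) / 12 <= M / 4 * / y + y * L2).
  { assert (HM : 0 <= M) by (unfold M; rewrite <- Hsq; apply pow2_ge_0).
    destruct Htail as [H | [[H1 H2] | [H1 H2]]].
    - apply IZR_le in H. fold L2 in H. nra.
    - apply IZR_le in H2. fold M in H2. unfold L2. rewrite H1. nra.
    - apply IZR_le in H2. fold M in H2. unfold L2. subst l. simpl. nra. }
  assert (HPI := PI_3_4).
  assert (PI * al * (/ y + 1 + (M + L2) / 12) <= PI * al * (M / 4 * / y + y * L2))
    by (apply Rmult_le_compat_l; nra).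
  replace (- PI * al / y - PI * al - PI * al * (M + L2) / 12)
    with (- (PI * al * (/ y + 1 + (M + L2) / 12))) by (field; lra).
  lra.
Qed.

Definition term2_majorant (c d : R) (k l : Z) : R :=
  c * geomZ rho k * geomZ rho l - d * (diracZ 1 k + diracZ (-1) k) * diracZ 0 l.

Lemma term2_le_majorant (al y : R) (k l : Z) : 5 <= al -> sqrt 3 / 2 <= y <= 98/100 ->
  term2 al y (IZR k) (IZR l)
  <= term2_majorant (exp (- PI * al / y - PI * al) * (101 * al ^ 2))
              (3 * al ^ 2 * exp (- PI * al / y)) k l.
Proof.
  intros Hal Hy. assert (S3 := sqrt3_bounds).
  assert (Hy0 : y <> 0) by lra.
  assert (Hc : 0 <= exp (- PI * al / y - PI * al) * (101 * al ^ 2))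
    by (generalize (exp_pos (- PI * al / y - PI * al)) (pow2_ge_0 al); nra).
  assert (Hg : 0 <= exp (- PI * al / y - PI * al) * (101 * al ^ 2) * geomZ rho k * geomZ rho l)
    by (apply Rmult_le_pos; [apply Rmult_le_pos; [exact Hc|]|]; apply geomZ_ge0, rho_lt_1).
  assert (HIZR_m1 : IZR (-1) = - IZR 1) by reflexivity.
  unfold term2_majorant.
  destruct (index_cases k l)
    as [[-> ->] | [[-> [-> | ->]] | [[[-> ->] | [[-> ->] | [[-> ->] | [-> ->]]]] | Htail]]].
  1-7: unfold diracZ; simpl.
  - rewrite term2_origin. lra.
  - generalize (term2_1_0 al y Hal Hy). lra.
  - rewrite HIZR_m1, <- Ropp_0, term2_opp. generalize (term2_1_0 al y Hal Hy). lra.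
  - generalize (term2_0_1 al y Hal Hy). lra.
  - rewrite HIZR_m1, term2_1_m1 by exact Hy0. generalize (term2_0_1 al y Hal Hy). lra.
  - rewrite HIZR_m1, <- Ropp_0, term2_opp. generalize (term2_0_1 al y Hal Hy). lra.
  - replace (term2 al y (IZR (-1)) 1) with (term2 al y 1 (-1))
      by (rewrite <- (term2_opp al y 1 (-1)); f_equal; lra).
    rewrite term2_1_m1 by exact Hy0. generalize (term2_0_1 al y Hal Hy). lra.
  - assert (Hdirac : (diracZ 1 k + diracZ (-1) k) * diracZ 0 l = 0).
    { unfold diracZ, tail_index in *.
      destruct (Z.eqb_spec l 0) as [->|]; [|ring].
      destruct (Z.eqb_spec k 1), (Z.eqb_spec k (-1)); [lia | lia | lia | ring]. }
    rewrite (Rmult_assoc (3 * al ^ 2 * _)), Hdirac, Rmult_0_r, Rminus_0_r.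
    destruct (term_bounds_exp al y k l Hal ltac:(lra)) as (_ & _ & Hterm).
    assert (Hs := quad_size_ge_abs k l).
    assert (Hexpo := expo_tail al y k l ltac:(lra) Hy Htail).
    assert (Hdecay := exp_decay_bound al _ _ _ k l Hal Hs Hexpo).
    generalize (Rle_abs (term2 al y (IZR k) (IZR l))). rewrite !Rmult_assoc in *. lra.
Qed.

Lemma term2_majorant_split (c d : R) (k : Z) : forall l,
  term2_majorant c d k l = (c * geomZ rho k) * geomZ rho l
                     + (- d * (diracZ 1 k + diracZ (-1) k)) * diracZ 0 l.
Proof. intros l. unfold term2_majorant. ring. Qed.

Lemma ex_sumZ_majorant_row (c d : R) (k : Z) : ex_sumZ (term2_majorant c d k).
Proof.
  apply (ex_sumZ_ext _ _ (fun l => eq_sym (term2_majorant_split c d k l))).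
  apply ex_sumZ_lin; [apply ex_sumZ_geomZ, rho_lt_1 | apply ex_sumZ_diracZ].
Qed.

Lemma sumZ_majorant_row (c d : R) (k : Z) :
  sumZ (term2_majorant c d k)
  = (c * rho_sum) * geomZ rho k + (- d) * diracZ 1 k + (- d) * diracZ (-1) k.
Proof.
  rewrite (sumZ_ext _ _ (term2_majorant_split c d k)), sumZ_lin, sumZ_geomZ, sumZ_diracZ;
    [unfold rho_sum; ring | apply rho_lt_1 | apply ex_sumZ_geomZ, rho_lt_1 | apply ex_sumZ_diracZ].
Qed.

Lemma sumZ2_majorant (c d : R) :
  ex_sumZ (fun k => sumZ (term2_majorant c d k))
  /\ sumZ (fun k => sumZ (term2_majorant c d k)) = c * rho_sum ^ 2 - 2 * d.
Proof.
  assert (Hgeom := ex_sumZ_geomZ rho rho_lt_1).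
  assert (Hdirac := ex_sumZ_diracZ 1).
  assert (Hfirst := ex_sumZ_lin (c * rho_sum) (- d) _ _ Hgeom Hdirac).
  assert (Hsecond := ex_sumZ_scal_l (- d) _ (ex_sumZ_diracZ (-1))).
  split.
  - apply (ex_sumZ_ext _ _ (fun k => eq_sym (sumZ_majorant_row c d k))).
    now apply ex_sumZ_plus.
  - rewrite (sumZ_ext _ _ (sumZ_majorant_row c d)), sumZ_plus, sumZ_lin, sumZ_scal_l by assumption.
    rewrite sumZ_geomZ, !sumZ_diracZ by exact rho_lt_1. unfold rho_sum. ring.
Qed.

Lemma sum_term2_le (al y : R) : 5 <= al -> sqrt 3 / 2 <= y <= 98/100 ->
  sumZ (fun k => sumZ (fun l => term2 al y (IZR k) (IZR l)))
  <= exp (- PI * al / y - PI * al) * (101 * al ^ 2) * rho_sum ^ 2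
     - 2 * (3 * al ^ 2 * exp (- PI * al / y)).
Proof.
  intros Hal Hy. assert (S3 := sqrt3_bounds).
  destruct (ex_sumZ_term2 al y Hal ltac:(unfold window; lra)) as [Hrow Hcol].
  destruct (sumZ2_majorant (exp (- PI * al / y - PI * al) * (101 * al ^ 2))
              (3 * al ^ 2 * exp (- PI * al / y))) as [Hmaj Hsum].
  rewrite <- Hsum. apply sumZ_le; [| exact Hcol | exact Hmaj].
  intros k. apply sumZ_le; [| apply Hrow | apply ex_sumZ_majorant_row].
  intros l. now apply term2_le_majorant.
Qed.

Lemma sum_term2_neg (al y : R) : 5 <= al -> sqrt 3 / 2 <= y <= 98/100 ->
  sumZ (fun k => sumZ (fun l => term2 al y (IZR k) (IZR l))) < 0.
Proof.
  intros Hal Hy. eapply Rle_lt_trans; [now apply sum_term2_le|].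
  set (E := exp (- PI * al / y)).
  assert (HPI := PI_3_4).
  assert (Hsmall : exp (- PI * al) <= / 32768)
    by (eapply Rle_trans; [apply exp_le_exp | apply exp_m15_le]; nra).
  replace (exp (- PI * al / y - PI * al)) with (E * exp (- PI * al))
    by (unfold E, Rminus; rewrite exp_plus; replace (- (PI * al)) with (- PI * al) by ring;
        reflexivity).
  assert (HG := rho_sum_bounds).
  assert (HEa : 0 < E * al ^ 2) by (apply Rmult_lt_0_compat; [apply exp_pos | nra]).
  assert (101 * exp (- PI * al) * rho_sum ^ 2 < 6) by (generalize (exp_pos (- PI * al)); nra).
  nra.
Qed.

Theorem mainTheorem19 (alpha y : R) :
  5 <= alpha ->
  sqrt 3 / 2 <= y <= sqrt 3 / 2 + 1 / (4 * sqrt alpha) ->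
  Derive_n (g alpha) 2 y < 0.
Proof.
  intros Halpha Hy.
  assert (S3 := sqrt3_bounds).
  assert (Hsqrt : 2236/1000 <= sqrt alpha)
    by (generalize (sqrt_sqrt alpha ltac:(lra)) (sqrt_pos alpha); nra).
  assert (Hwidth : 1 / (4 * sqrt alpha) <= 1 / (4 * (2236/1000)))
    by (unfold Rdiv; rewrite !Rmult_1_l; apply Rinv_le_contravar; lra).
  rewrite Derive2_g by (unfold window; lra).
  apply sum_term2_neg; lra.
Qed.
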